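(* Let $A,B\in\mathbb{R}^{m\times n}$ with $m<n$ and $b\in\mathbb{R}^m$, and let $1\le p\le\infty$. Let $A = M_A - N_A$ with $\operatorname{rank}(M_A) =m$. If $M_A^\dagger b\geq0$, $M_A^\dagger (N_A + B) \geq 0$ and $\|M_A^\dagger (N_A + B)\|_p <1$, then the equation $Ax-B|x|=b$ has at least one nonnegative solution.
   Context: $M^\dagger$ is the Moore–Penrose inverse; $|x|$ is the entrywise absolute value; vector/matrix inequalities are entrywise; $\|\cdot\|_p$ on matrices is the operator norm induced by the vector $p$-norm. *)

From HB Require Import structures.
From mathcomp Require Import all_boot all_order all_algebra.
From mathcomp Require Import all_classical all_reals all_analysis.
Set Implicit Arguments. Unset Strict Implicit. Unset Printing Implicit Defensive.
Import Order.TTheory GRing.Theory Num.Theory.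
Local Open Scope ring_scope.

Definition moore_penrose (R : realType) (m n : nat)
  (M : 'M[R]_(m, n)) (X : 'M[R]_(n, m)) : Prop :=
  [/\ M *m X *m M = M, X *m M *m X = X,
      (M *m X)^T = M *m X & (X *m M)^T = X *m M].

Definition mx_abs (R : realType) (m n : nat) (A : 'M[R]_(m, n)) : 'M[R]_(m, n) :=
  map_mx (fun x => `|x|) A.

Definition mx_nonneg (R : realType) (m n : nat) (A : 'M[R]_(m, n)) : Prop :=
  forall i j, 0 <= A i j.

Definition vnorm (R : realType) (n : nat) (p : \bar R) (x : 'cV[R]_n) : R :=
  match p with
  | EFin r => (\sum_(i < n) `|x i 0| `^ r) `^ r^-1
  | +oo%E => \big[Num.max/0]_(i < n) `|x i 0|
  | -oo%E => 0
  end.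

Definition opnorm (R : realType) (k n : nat) (p : \bar R) (M : 'M[R]_(k, n)) : R :=
  sup [set vnorm p (M *m x) | x in [set x : 'cV[R]_n | vnorm p x <= 1]].

From HB Require Import structures.
From mathcomp Require Import all_boot all_order all_algebra.
From mathcomp Require Import all_classical all_reals all_analysis.
Set Implicit Arguments. Unset Strict Implicit. Unset Printing Implicit Defensive.
Import Order.TTheory GRing.Theory Num.Theory.
Local Open Scope ring_scope.

(* Since M_A has full row rank, M_A M_A^+ = I, so every solution of the fixed
   point equation x = M_A^+ b + C x with C := M_A^+ (N_A + B) solves
   M_A x - (N_A + B) x = b, which for x >= 0 is A x - B |x| = b.  The induced
   p-norm of C >= 0 is below 1 and the p-norm is monotone, so no nonzero y >= 0
   satisfies y <= C y.  This makes I - C invertible (apply it to |v| for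
   C v = v) and forces the fixed point x to be nonnegative (apply it to the
   negative part of x). *)

Section AbsoluteValue.
Variable R : realType.

Lemma mx_abs_id (m n : nat) (A : 'M[R]_(m, n)) : mx_nonneg A -> mx_abs A = A.
Proof. by move=> A0; apply/matrixP => i j; rewrite mxE ger0_norm. Qed.

Lemma mx_abs_mulmx_le (m n k : nat) (A : 'M[R]_(m, n)) (B : 'M[R]_(n, k)) i j :
  mx_abs (A *m B) i j <= (mx_abs A *m mx_abs B) i j.
Proof.
rewrite !mxE; apply: le_trans (ler_norm_sum _ _ _) _.
by apply: ler_sum => l _; rewrite normrM !mxE.
Qed.

End AbsoluteValue.

Section MonotoneNorm.
Variables (R : realType) (n : nat).

Definition monotone_norm (N : 'cV[R]_n -> R) : Prop :=
  [/\ forall x, N (mx_abs x) = N x,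
      forall u v : 'cV[R]_n, (forall i, 0 <= u i 0 <= v i 0) -> N u <= N v,
      forall t u, 0 <= t -> N (t *: u) = t * N u &
      forall u, mx_nonneg u -> u != 0 -> 0 < N u].

Definition induced_norm (N : 'cV[R]_n -> R) (C : 'M[R]_n) : R :=
  sup [set N (C *m x) | x in [set x : 'cV[R]_n | N x <= 1]].

Variables (N : 'cV[R]_n -> R) (hN : monotone_norm N).

Lemma monotone_norm0 : N 0 = 0.
Proof.
by case: hN => _ _ Nhom _; rewrite -(scale0r (0 : 'cV[R]_n)) Nhom // mul0r.
Qed.

Lemma has_sup_induced_norm (C : 'M[R]_n) :
  has_sup [set N (C *m x) | x in [set x : 'cV[R]_n | N x <= 1]].
Proof.
case: hN => Nabs Nmono Nhom Npos.
split; first by exists (N (C *m 0)), 0; rewrite //= monotone_norm0 ler01.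
pose e i : 'cV[R]_n := delta_mx i 0.
have Ne_gt0 i : 0 < N (e i).
  apply: (Npos) => [k j|]; first by rewrite mxE; case: (_ && _).
  by apply/matrix0Pn; exists i, 0; rewrite mxE !eqxx oner_eq0.
(* |x_j| N(e_j) <= N x <= 1, so |x| is dominated by v := (1 / N(e_j))_j *)
pose v : 'cV[R]_n := \col_j (N (e j))^-1.
exists (N (mx_abs C *m v)) => _ [x /= Nx1 <-].
rewrite -Nabs; apply: (Nmono) => i; rewrite mxE normr_ge0 /=.
have := mx_abs_mulmx_le C x i 0; rewrite mxE => /le_trans; apply.
rewrite !mxE ler_sum // => j _.
rewrite ler_wpM2l ?mxE ?normr_ge0 // -[_^-1]mul1r ler_pdivlMr //.
apply: le_trans Nx1; rewrite -Nhom // -(Nabs x); apply: (Nmono) => k.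
by rewrite !mxE; case: eqP => [->|_]; rewrite ?mulr1 ?mulr0 ?lexx ?normr_ge0.
Qed.

Lemma le_induced_norm (C : 'M[R]_n) x :
  N x <= 1 -> N (C *m x) <= induced_norm N C.
Proof.
by move=> Nx1; apply: sup_upper_bound (has_sup_induced_norm C) _ _; exists x.
Qed.

Variables (C : 'M[R]_n) (C0 : mx_nonneg C) (normC_lt1 : induced_norm N C < 1).

Lemma subinvariant_eq0 (y : 'cV[R]_n) :
  mx_nonneg y -> (forall i, y i 0 <= (C *m y) i 0) -> y = 0.
Proof.
case: hN => _ Nmono Nhom Npos y0 yCy; apply/eqP/negPn/negP => y_neq0.
have Ny_gt0 := Npos _ y0 y_neq0.
have Ny_inv_ge0 : 0 <= (N y)^-1 by rewrite invr_ge0 ltW.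
pose z := (N y)^-1 *: y.
have Nz1 : N z = 1 by rewrite Nhom // mulVf // gt_eqF.
have NCz_ge1 : 1 <= N (C *m z).
  rewrite -Nz1; apply: (Nmono) => i; rewrite -scalemxAr !mxE mulr_ge0 //=.
  by rewrite ler_wpM2l // (le_trans (yCy i)) // mxE.
have NCz_le : N (C *m z) <= induced_norm N C.
  by apply: le_induced_norm; rewrite Nz1.
by have := le_lt_trans (le_trans NCz_ge1 NCz_le) normC_lt1; rewrite ltxx.
Qed.

Lemma unitmx_1_sub : 1%:M - C \in unitmx.
Proof.
rewrite unitmxE unitfE -det_tr; apply/negP => /det0P [v v_neq0 vC].
have Cv : C *m v^T = v^T.
  apply/eqP; rewrite eq_sym -subr_eq0 -[X in X - _]mul1mx -mulmxBl.
  by rewrite -[_ *m _]trmxK trmx_mul trmxK vC trmx0.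
have abs_v0 : mx_abs v^T = 0.
  apply: subinvariant_eq0 => [i j|i]; first by rewrite mxE normr_ge0.
  rewrite -{1}Cv; apply: le_trans (mx_abs_mulmx_le _ _ _ _) _.
  by rewrite mx_abs_id.
move/negP: v_neq0; apply; apply/eqP/matrixP => i j.
by move/matrixP/(_ j i)/eqP: abs_v0; rewrite !mxE normr_eq0 => /eqP ->.
Qed.

Lemma fixpoint_nonneg (d x : 'cV[R]_n) :
  mx_nonneg d -> x = d + C *m x -> mx_nonneg x.
Proof.
move=> d0 xE.
pose w : 'cV[R]_n := \col_i Num.max (- x i 0) 0.
have w0 i : 0 <= w i 0 by rewrite mxE le_max lexx orbT.
have w_eq0 : w = 0.
  apply: subinvariant_eq0 => [i j|i]; first by rewrite ord1.
  rewrite [w i 0]mxE ge_max; apply/andP; split; last first.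
    by rewrite mxE sumr_ge0 // => j _; rewrite mulr_ge0.
  (* -x = -d - C x <= C (-x) <= C w, since d >= 0, C >= 0 and -x <= w *)
  rewrite xE mxE opprD lerBlDr (le_trans (_ : _ <= 0)) ?oppr_le0 ?lerDr //.
  rewrite -lerBlDr sub0r !mxE -sumrN ler_sum // => j _.
  by rewrite -mulrN ler_wpM2l // mxE le_max lexx.
move=> i j; rewrite ord1 -oppr_le0.
by move/matrixP/(_ i 0): w_eq0; rewrite !mxE => <-; rewrite le_max lexx.
Qed.

End MonotoneNorm.

Section VectorNorm.
Variables (R : realType) (n : nat).

Lemma vnorm_inf_monotone : monotone_norm (@vnorm R n +oo%E).
Proof.
split => /=.
- by move=> x; apply: eq_bigr => i _; rewrite mxE normr_id.
- move=> u v uv; apply: le_bigmax2 => i _.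
  by case/andP: (uv i) => u0 uv_i; rewrite !ger0_norm // (le_trans u0 uv_i).
- move=> t u t0; elim/big_rec2: _ => [|i a b _ ->]; first by rewrite mulr0.
  by rewrite mxE normrM (ger0_norm t0) maxr_pMr.
- move=> u _ /matrix0Pn [i [j u_neq0]]; rewrite ord1 in u_neq0.
  by apply: lt_le_trans (le_bigmax _ _ i); rewrite normr_gt0.
Qed.

Lemma vnorm_fin_monotone (r : R) : 1 <= r -> monotone_norm (@vnorm R n r%:E).
Proof.
move=> r1; have r0 : 0 < r by apply: lt_le_trans r1.
have sum_ge0 (u : 'cV[R]_n) : 0 <= \sum_(i < n) `|u i 0| `^ r.
  by apply: sumr_ge0 => i _; apply: powR_ge0.
split => /=.
- by move=> x; congr (_ `^ _); apply: eq_bigr => i _; rewrite mxE normr_id.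
- move=> u v uv; apply: ge0_ler_powR;
    rewrite ?nnegrE ?sum_ge0 ?invr_ge0 ?(ltW r0) //.
  apply: ler_sum => i _; case/andP: (uv i) => u0 uv_i.
  apply: ge0_ler_powR; rewrite ?nnegrE ?normr_ge0 ?(ltW r0) //.
  by rewrite !ger0_norm // (le_trans u0 uv_i).
- move=> t u t0.
  rewrite (eq_bigr (fun i => t `^ r * `|u i 0| `^ r)); last first.
    by move=> i _; rewrite mxE normrM (ger0_norm t0) powRM.
  rewrite -big_distrr /= powRM ?powR_ge0 ?sum_ge0 // -powRrM mulfV ?gt_eqF //.
  by rewrite powRr1.
- move=> u _ /matrix0Pn [i [j u_neq0]]; rewrite ord1 in u_neq0.
  apply: powR_gt0; rewrite (bigD1 i) //= ltr_wpDr //.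
    by rewrite sumr_ge0 // => j _; rewrite powR_ge0.
  by rewrite powR_gt0 // normr_gt0.
Qed.

Lemma vnorm_monotone (p : \bar R) : (1 <= p)%E -> monotone_norm (@vnorm R n p).
Proof.
case: p => [r| |] p1; last by [].
  by apply: vnorm_fin_monotone; rewrite -lee_fin.
exact: vnorm_inf_monotone.
Qed.

End VectorNorm.

Lemma moore_penrose_row_free_mulmx (R : realType) (m n : nat)
    (M : 'M[R]_(m, n)) (X : 'M[R]_(n, m)) :
  moore_penrose M X -> row_free M -> M *m X = 1%:M.
Proof. by case=> MXM _ _ _ /row_free_inj; apply; rewrite mul1mx. Qed.

Theorem corollary3p6 (R : realType) (m n : nat)
  (A B : 'M[R]_(m, n)) (b : 'cV[R]_m) (p : \bar R)
  (MA NA : 'M[R]_(m, n)) (MAdag : 'M[R]_(n, m)) :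
  (m < n)%N -> (1 <= p)%E ->
  A = MA - NA -> \rank MA = m ->
  moore_penrose MA MAdag ->
  mx_nonneg (MAdag *m b) ->
  mx_nonneg (MAdag *m (NA + B)) ->
  opnorm p (MAdag *m (NA + B)) < 1 ->
  exists x : 'cV[R]_n, mx_nonneg x /\ A *m x - B *m mx_abs x = b.
Proof.
move=> _ p1 -> rankMA MPMA d0 C0 normC_lt1.
set C := MAdag *m (NA + B) in C0 normC_lt1.
set d := MAdag *m b in d0.
have Np := vnorm_monotone n p1.
have MA_MAdag : MA *m MAdag = 1%:M.
  by apply: moore_penrose_row_free_mulmx MPMA _; rewrite /row_free rankMA.
pose x := invmx (1%:M - C) *m d.
have xE : x = d + C *m x.
  apply/eqP; rewrite -subr_eq -[X in X - _]mul1mx -mulmxBl.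
  by rewrite mulmxA mulmxV ?mul1mx // (unitmx_1_sub Np C0 normC_lt1).
have x0 : mx_nonneg x := fixpoint_nonneg Np C0 normC_lt1 d0 xE.
exists x; split => //; rewrite mx_abs_id //.
have MAx : MA *m x = b + (NA + B) *m x.
  by rewrite {1}xE mulmxDr !mulmxA MA_MAdag !mul1mx.
by rewrite mulmxBl MAx mulmxDl -addrA -opprD addrK.
Qed.
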